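(* Let $L_x=L_y=:L>0$, $L_{xy}\geq 0$, $0<\mu_x\leq L$, $0<\mu_y\leq L$, set $\mu=\min\{\mu_x,\mu_y\}$, and let $t\in\left(0, \tfrac{2\mu}{\mu L+L_{xy}^2}\right)$. Let $$ \alpha=1+\tfrac{1}{2}\left(L^2+\mu^2+2L_{xy}^2\right)t^2-(L+\mu)t +\tfrac{1}{2}(L-\mu)t\sqrt{(Lt + \mu t - 2)^2 + 4L_{xy}^2t^2}. $$ Then the bound $\|x^2-x^\star\|^2+\|y^2-y^\star\|^2\leq\alpha(\|x^1-x^\star\|^2+\|y^1-y^\star\|^2)$ for one step of the gradient descent-ascent method is exact: there exist $n,m$, a function $F\in\mathcal{F}(L_x, L_y, L_{xy}, \mu_x, \mu_y)$ on $\mathbb{R}^n\times\mathbb{R}^m$ with unique saddle point $(x^\star,y^\star)$, and an initial point $(x^1,y^1)\neq(x^\star,y^\star)$ such that $x^{2}=x^1-t\nabla_x F(x^1, y^1)$, $y^{2}=y^1+t\nabla_y F(x^1, y^1)$ satisfy $$ \|x^2-x^\star\|^2+\|y^2-y^\star\|^2= \alpha\left(\|x^1-x^\star\|^2+\|y^1-y^\star\|^2\right). $$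
   Context: $\mathcal{F}(L_x, L_y, L_{xy}, \mu_x, \mu_y)$ denotes the set of differentiable $F:\mathbb{R}^n\times\mathbb{R}^m\to\mathbb{R}$ such that for all $x,x_1,x_2,y,y_1,y_2$: $\|\nabla_x F(x_2, y)-\nabla_x F(x_1, y)\|\leq L_x\|x_2-x_1\|$; $\|\nabla_y F(x, y_2)-\nabla_y F(x, y_1)\|\leq L_y\|y_2-y_1\|$; $\|\nabla_x F(x, y_2)-\nabla_x F(x, y_1)\|\leq L_{xy}\|y_2-y_1\|$; $\|\nabla_y F(x_2, y)-\nabla_y F(x_1, y)\|\leq L_{xy}\|x_2-x_1\|$; $F(\cdot, y)-\tfrac{\mu_x}{2}\|\cdot\|^2$ convex for every $y$ and $F(x,\cdot)+\tfrac{\mu_y}{2}\|\cdot\|^2$ concave for every $x$. A saddle point is $(x^\star,y^\star)$ with $F(x^\star, y)\leq F(x^\star, y^\star)\leq F(x, y^\star)$ for all $x,y$. *)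

From HB Require Import structures.
From mathcomp Require Import all_boot all_order all_algebra.
From mathcomp Require Import all_classical all_reals all_analysis.
Set Implicit Arguments. Unset Strict Implicit. Unset Printing Implicit Defensive.
Import Order.TTheory GRing.Theory Num.Theory.
Import numFieldNormedType.Exports.
Local Open Scope ring_scope.

Section Defs.
Variable R : realType.

(* Euclidean norm on R^n (rows); the library's matrix norm is the sup norm. *)
Definition enorm (n : nat) (v : 'rV[R]_n) : R := Num.sqrt (\sum_(i < n) v 0 i ^+ 2).

Definition edot (n : nat) (u v : 'rV[R]_n) : R := \sum_(i < n) u 0 i * v 0 i.

Definition gradx (n m : nat) (F : 'rV[R]_n * 'rV[R]_m -> R) (p : 'rV[R]_n * 'rV[R]_m)
  : 'rV[R]_n := \row_(i < n) ('d F p (delta_mx 0 i, 0)).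
Definition grady (n m : nat) (F : 'rV[R]_n * 'rV[R]_m -> R) (p : 'rV[R]_n * 'rV[R]_m)
  : 'rV[R]_m := \row_(j < m) ('d F p (0, delta_mx 0 j)).

Definition convex_on_Rn (n : nat) (f : 'rV[R]_n -> R) : Prop :=
  forall (a b : 'rV[R]_n) (s : R), 0 <= s -> s <= 1 ->
    f (s *: a + (1 - s) *: b) <= s * f a + (1 - s) * f b.

Definition in_class (n m : nat) (Lx Ly Lxy mux muy : R)
  (F : 'rV[R]_n * 'rV[R]_m -> R) : Prop :=
  (forall p, differentiable F p) /\
  (forall x1 x2 y, enorm (gradx F (x2, y) - gradx F (x1, y)) <= Lx * enorm (x2 - x1)) /\
  (forall x y1 y2, enorm (grady F (x, y2) - grady F (x, y1)) <= Ly * enorm (y2 - y1)) /\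
  (forall x y1 y2, enorm (gradx F (x, y2) - gradx F (x, y1)) <= Lxy * enorm (y2 - y1)) /\
  (forall x1 x2 y, enorm (grady F (x2, y) - grady F (x1, y)) <= Lxy * enorm (x2 - x1)) /\
  (forall y, convex_on_Rn (fun x => F (x, y) - mux / 2 * enorm x ^+ 2)) /\
  (forall x, convex_on_Rn (fun y => - (F (x, y) + muy / 2 * enorm y ^+ 2))).

Definition saddle_point (n m : nat) (F : 'rV[R]_n * 'rV[R]_m -> R)
  (xs : 'rV[R]_n) (ys : 'rV[R]_m) : Prop :=
  forall x y, F (xs, y) <= F (xs, ys) /\ F (xs, ys) <= F (x, ys).

Definition gda_alpha (L Lxy mu t : R) : R :=
  1 + 2^-1 * (L ^+ 2 + mu ^+ 2 + 2 * Lxy ^+ 2) * t ^+ 2 - (L + mu) * t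
    + 2^-1 * (L - mu) * t * Num.sqrt ((L * t + mu * t - 2) ^+ 2 + 4 * Lxy ^+ 2 * t ^+ 2).

End Defs.

From HB Require Import structures.
From mathcomp Require Import all_boot all_order all_algebra.
From mathcomp Require Import all_classical all_reals all_analysis.
From mathcomp Require Import ring lra.
Set Implicit Arguments. Unset Strict Implicit. Unset Printing Implicit Defensive.
Import Order.TTheory GRing.Theory Num.Theory.
Import numFieldNormedType.Exports.
Local Open Scope ring_scope.

(* The bound is attained by the quadratic F(x, y) = a/2 x^2 + b x y - c/2 y^2 on
   R x R, with b = L_xy and (a, c) = (mu_x, L) if mu = mu_x, (L, mu_y) otherwise;
   its only saddle point is the origin. One GDA step from (x, y) is
   the linear map with matrix M = [[1 - t a, - t b], [t b, 1 - t c]], so the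
   squared distance to the origin after the step is the quadratic form of M^T M,
   whose largest eigenvalue is alpha; starting from an eigenvector for it gives
   equality. *)

Definition max_eigen2 {R : rcfType} (p q r : R) : R :=
  (p + r) / 2 + Num.sqrt (((p - r) / 2) ^+ 2 + q ^+ 2).

Lemma max_eigen2_attained (R : rcfType) (p q r : R) :
  exists v1 v2 : R, (v1, v2) != (0, 0) /\
    p * v1 ^+ 2 + 2 * q * v1 * v2 + r * v2 ^+ 2 = max_eigen2 p q r * (v1 ^+ 2 + v2 ^+ 2).
Proof.
rewrite /max_eigen2; have [->|q0] := eqVneq q 0.
  rewrite expr0n addr0 sqrtr_sqr.
  have [rp|pr] := lerP r p; [exists 1, 0 | exists 0, 1].
    by rewrite xpair_eqE oner_eq0 ger0_norm; [split=> //; field | lra].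
  by rewrite xpair_eqE oner_eq0 andbF ltr0_norm; [split=> //; field | lra].
set D := Num.sqrt _.
have D2 : D ^+ 2 = ((p - r) / 2) ^+ 2 + q ^+ 2.
  by rewrite sqr_sqrtr // addr_ge0 ?sqr_ge0.
exists q, ((p + r) / 2 + D - p); split; first by rewrite xpair_eqE negb_and q0.
apply/eqP; rewrite -subr_eq0; apply/eqP.
transitivity (((p + r) / 2 + D - p) * (((p - r) / 2) ^+ 2 + q ^+ 2 - D ^+ 2)).
  by field.
by rewrite D2 subrr mulr0.
Qed.

Section Euclidean.
Variable R : realType.

Lemma enormZ (n : nat) (k : R) (v : 'rV[R]_n) : enorm (k *: v) = `|k| * enorm v.
Proof.
rewrite /enorm; under eq_bigr do rewrite mxE exprMn.
by rewrite -mulr_sumr sqrtrM ?sqr_ge0 // sqrtr_sqr.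
Qed.

Lemma enorm1_sqr (v : 'rV[R]_1) : enorm v ^+ 2 = v 0 0 ^+ 2.
Proof. by rewrite /enorm big_ord1 sqr_sqrtr // sqr_ge0. Qed.

Lemma convex_on_Rn_quadratic1 (k l e : R) : 0 <= k ->
  convex_on_Rn (fun x : 'rV[R]_1 => k * x 0 0 ^+ 2 + l * x 0 0 + e).
Proof.
move=> k0 A B s s0 s1; rewrite !mxE -subr_ge0.
set u := A 0 0; set w := B 0 0.
have -> : s * (k * u ^+ 2 + l * u + e) + (1 - s) * (k * w ^+ 2 + l * w + e)
  - (k * (s * u + (1 - s) * w) ^+ 2 + l * (s * u + (1 - s) * w) + e)
  = k * s * (1 - s) * (u - w) ^+ 2 by ring.
by rewrite mulr_ge0 ?sqr_ge0 // mulr_ge0 ?subr_ge0 // mulr_ge0.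
Qed.

Lemma is_diff_linear (U V : normedModType R) (f : U -> V) x :
  linear f -> continuous f -> is_diff x f f.
Proof.
move=> lin cf.
pose fL : {linear U -> V} := HB.pack f (GRing.isLinear.Build _ _ _ _ _ lin).
change (is_diff x (fL : U -> V) fL).
by apply: DiffDef; [exact: linear_differentiable | exact: diff_lin].
Qed.

End Euclidean.

Lemma eq0_of_le_sqr (R : realFieldType) (k g : R) :
  0 <= k -> (forall d, g * d <= k * d ^+ 2) -> g = 0.
Proof.
move=> k0 gle; have k1 : k + 1 != 0 by rewrite gt_eqF //; lra.
have := gle (g / (k + 1)).
have -> : k * (g / (k + 1)) ^+ 2 = g * (g / (k + 1)) - (g / (k + 1)) ^+ 2 by field.
rewrite lerBrDr gerDl => d2.
have /eqP : g / (k + 1) = 0 by apply/eqP; rewrite -sqrf_eq0 eq_le d2 sqr_ge0.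
by rewrite mulf_eq0 invr_eq0 (negPf k1) orbF => /eqP.
Qed.

Section SaddleQuadratic.
Variable R : realType.

Definition coordx (p : 'rV[R]_1 * 'rV[R]_1) : R := p.1 0 0.
Definition coordy (p : 'rV[R]_1 * 'rV[R]_1) : R := p.2 0 0.

Global Instance is_diff_coordx p : is_diff p coordx coordx.
Proof.
apply: is_diff_linear; first by move=> k u v; rewrite /coordx !mxE.
move=> q; apply: (@continuous_comp _ _ _ fst (fun M : 'rV[R]_1 => M 0 0)).
  exact: cvg_fst.
exact: coord_continuous.
Qed.

Global Instance is_diff_coordy p : is_diff p coordy coordy.
Proof.
apply: is_diff_linear; first by move=> k u v; rewrite /coordy !mxE.
move=> q; apply: (@continuous_comp _ _ _ snd (fun M : 'rV[R]_1 => M 0 0)).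
  exact: cvg_snd.
exact: coord_continuous.
Qed.

Variables a b c : R.

Definition saddle_quad : 'rV[R]_1 * 'rV[R]_1 -> R :=
  (a / 2) *: (coordx * coordx) + b *: (coordx * coordy) - (c / 2) *: (coordy * coordy).

Lemma saddle_quadE x y :
  saddle_quad (x, y) = a / 2 * x 0 0 ^+ 2 + b * x 0 0 * y 0 0 - c / 2 * y 0 0 ^+ 2.
Proof. by rewrite /saddle_quad !fctE /coordx /coordy /= -![_ *: _]/(_ * _); ring. Qed.

Lemma differentiable_saddle_quad p : differentiable saddle_quad p.
Proof. exact: ex_diff. Qed.

Lemma diff_saddle_quad p h : 'd saddle_quad p h =
  a * coordx p * coordx h + b * (coordx p * coordy h + coordy p * coordx h)
  - c * coordy p * coordy h.
Proof. by rewrite /saddle_quad diff_val /= !fctE /= -![_ *: _]/(_ * _); field. Qed.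

Lemma gradx_saddle_quad x y : gradx saddle_quad (x, y) = a *: x + b *: y.
Proof.
apply/rowP => j; rewrite ord1 !mxE diff_saddle_quad /coordx /coordy /= !mxE /=.
by ring.
Qed.

Lemma grady_saddle_quad x y : grady saddle_quad (x, y) = b *: x - c *: y.
Proof.
apply/rowP => j; rewrite ord1 !mxE diff_saddle_quad /coordx /coordy /= !mxE /=.
by ring.
Qed.

Lemma saddle_quad_in_class (Lx Ly Lxy mux muy : R) :
  `|a| <= Lx -> `|c| <= Ly -> `|b| <= Lxy -> mux <= a -> muy <= c ->
  in_class Lx Ly Lxy mux muy saddle_quad.
Proof.
move=> aLx cLy bLxy muxa muyc.
have lipschitz1 k K (v w : 'rV[R]_1) :
    `|k| <= K -> v 0 0 = k * w 0 0 -> enorm v <= K * enorm w.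
  move=> kK vkw; have -> : v = k *: w by apply/rowP => j; rewrite ord1 mxE.
  by rewrite enormZ ler_wpM2r // sqrtr_ge0.
split; first exact: differentiable_saddle_quad.
split.
  by move=> x1 x2 y; apply: lipschitz1 aLx _; rewrite !gradx_saddle_quad !mxE; ring.
split.
  move=> x y1 y2; apply: (lipschitz1 (- c)); first by rewrite normrN.
  by rewrite !grady_saddle_quad !mxE; ring.
split.
  by move=> x y1 y2; apply: lipschitz1 bLxy _; rewrite !gradx_saddle_quad !mxE; ring.
split.
  by move=> x1 x2 y; apply: lipschitz1 bLxy _; rewrite !grady_saddle_quad !mxE; ring.
split.
  move=> y; have -> : (fun x => saddle_quad (x, y) - mux / 2 * enorm x ^+ 2) =
      (fun x => (a - mux) / 2 * x 0 0 ^+ 2 + b * y 0 0 * x 0 0 + - (c / 2 * y 0 0 ^+ 2)).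
    by apply: funext => x; rewrite saddle_quadE enorm1_sqr; ring.
  by apply: convex_on_Rn_quadratic1; lra.
move=> x; have -> : (fun y => - (saddle_quad (x, y) + muy / 2 * enorm y ^+ 2)) =
    (fun y => (c - muy) / 2 * y 0 0 ^+ 2 + - b * x 0 0 * y 0 0 + - (a / 2 * x 0 0 ^+ 2)).
  by apply: funext => y; rewrite saddle_quadE enorm1_sqr; ring.
by apply: convex_on_Rn_quadratic1; lra.
Qed.

Lemma saddle_point_saddle_quad0 : 0 <= a -> 0 <= c -> saddle_point saddle_quad 0 0.
Proof.
move=> a0 c0 x y; rewrite !saddle_quadE !mxE.
have := sqr_ge0 (x 0 0); have := sqr_ge0 (y 0 0); nra.
Qed.

Lemma saddle_point_saddle_quad_unique xs ys : 0 < a -> 0 < c ->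
  saddle_point saddle_quad xs ys -> xs = 0 /\ ys = 0.
Proof.
move=> a0 c0 sp; set X := xs 0 0; set Y := ys 0 0.
have gy0 : b * X - c * Y = 0.
  apply: (@eq0_of_le_sqr _ (c / 2)) => [|d]; first lra.
  have [+ _] := sp xs (ys + const_mx d); rewrite !saddle_quadE !mxE -/X -/Y.
  lra.
have gx0 : a * X + b * Y = 0.
  apply/eqP; rewrite -oppr_eq0; apply/eqP.
  apply: (@eq0_of_le_sqr _ (a / 2)) => [|d]; first lra.
  have [_ +] := sp (xs + const_mx d) ys; rewrite !saddle_quadE !mxE -/X -/Y.
  lra.
have X0 : X = 0.
  have acb : 0 < a * c + b ^+ 2 by rewrite ltr_pwDl ?sqr_ge0 ?mulr_gt0.
  apply: (mulIf (lt0r_neq0 acb)); rewrite mul0r.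
  transitivity (c * (a * X + b * Y) + b * (b * X - c * Y)); first by ring.
  by rewrite gx0 gy0; ring.
have Y0 : Y = 0.
  by apply: (mulfI (lt0r_neq0 c0)); move: gy0; rewrite X0 !mulr0; lra.
by split; apply/rowP => j; rewrite ord1 mxE.
Qed.

Lemma gda_step_saddle_quad (t : R) x y :
  enorm (x - t *: gradx saddle_quad (x, y)) ^+ 2
    + enorm (y + t *: grady saddle_quad (x, y)) ^+ 2 =
  ((1 - t * a) ^+ 2 + (t * b) ^+ 2) * x 0 0 ^+ 2
    + 2 * (t ^+ 2 * b * (a - c)) * x 0 0 * y 0 0
    + ((t * b) ^+ 2 + (1 - t * c) ^+ 2) * y 0 0 ^+ 2.
Proof.
by rewrite gradx_saddle_quad grady_saddle_quad !enorm1_sqr !mxE; ring.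
Qed.

End SaddleQuadratic.

Lemma gda_alpha_max_eigen2 (R : realType) (L mu a b c t : R) :
  mu <= L -> 0 <= t -> a + c = L + mu -> (a - c) ^+ 2 = (L - mu) ^+ 2 ->
  gda_alpha L b mu t = max_eigen2 ((1 - t * a) ^+ 2 + (t * b) ^+ 2)
    (t ^+ 2 * b * (a - c)) ((t * b) ^+ 2 + (1 - t * c) ^+ 2).
Proof.
move=> muL t0 acE acD; rewrite /max_eigen2.
have -> :
    (((1 - t * a) ^+ 2 + (t * b) ^+ 2 - ((t * b) ^+ 2 + (1 - t * c) ^+ 2)) / 2) ^+ 2
    + (t ^+ 2 * b * (a - c)) ^+ 2
  = ((L - mu) * t / 2) ^+ 2 * ((L * t + mu * t - 2) ^+ 2 + 4 * b ^+ 2 * t ^+ 2).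
  transitivity ((a - c) ^+ 2 * (t ^+ 2 * (2 - (a + c) * t) ^+ 2 / 4 + t ^+ 4 * b ^+ 2)).
    by field.
  by rewrite acE acD; field.
rewrite sqrtrM ?sqr_ge0 // sqrtr_sqr ger0_norm; last first.
  by rewrite divr_ge0 // mulr_ge0 // subr_ge0.
have a2c2 : a ^+ 2 + c ^+ 2 = L ^+ 2 + mu ^+ 2.
  transitivity (((a + c) ^+ 2 + (a - c) ^+ 2) / 2); first by field.
  by rewrite acE acD; field.
rewrite /gda_alpha; apply/eqP; rewrite -subr_eq0; apply/eqP.
transitivity ((L ^+ 2 + mu ^+ 2 - (a ^+ 2 + c ^+ 2)) * t ^+ 2 / 2
  - (L + mu - (a + c)) * t); first by field.
by rewrite a2c2 acE !subrr; ring.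
Qed.

Theorem proposition2p4 (R : realType) (L Lxy mux muy t : R) :
  0 < L -> 0 <= Lxy -> 0 < mux -> mux <= L -> 0 < muy -> muy <= L ->
  0 < t -> t < 2 * Num.min mux muy / (Num.min mux muy * L + Lxy ^+ 2) ->
  exists (n m : nat) (F : 'rV[R]_n * 'rV[R]_m -> R)
         (xs : 'rV[R]_n) (ys : 'rV[R]_m) (x1 : 'rV[R]_n) (y1 : 'rV[R]_m),
    in_class L L Lxy mux muy F /\
    saddle_point F xs ys /\
    (forall xs' ys', saddle_point F xs' ys' -> xs' = xs /\ ys' = ys) /\
    (x1, y1) <> (xs, ys) /\
    let x2 := x1 - t *: gradx F (x1, y1) in
    let y2 := y1 + t *: grady F (x1, y1) in
    enorm (x2 - xs) ^+ 2 + enorm (y2 - ys) ^+ 2 =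
      gda_alpha L Lxy (Num.min mux muy) t * (enorm (x1 - xs) ^+ 2 + enorm (y1 - ys) ^+ 2).
Proof.
move=> L0 Lxy0 mux0 muxL muy0 muyL t0 _; set mu := Num.min mux muy.
have [a [c [a0 c0 /andP[muxa aL] /andP[muyc cL] [acE acD]]]] : exists a c,
    [/\ 0 < a, 0 < c, mux <= a <= L, muy <= c <= L
      & a + c = L + mu /\ (a - c) ^+ 2 = (L - mu) ^+ 2].
  rewrite /mu; have [muxy|muyx] := lerP mux muy.
    by exists mux, L; rewrite !lexx muxL muyL; split=> //; split; ring.
  by exists L, muy; rewrite !lexx muxL muyL.
have muL : mu <= L by rewrite ge_min muxL.
pose F := saddle_quad a Lxy c.
have [v1 [v2 [v0 eigv]]] := max_eigen2_attained ((1 - t * a) ^+ 2 + (t * Lxy) ^+ 2)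
  (t ^+ 2 * Lxy * (a - c)) ((t * Lxy) ^+ 2 + (1 - t * c) ^+ 2).
exists 1%N, 1%N, F, 0, 0, (const_mx v1), (const_mx v2).
split; first by apply: saddle_quad_in_class; rewrite ?ger0_norm //; exact: ltW.
split; first by apply: saddle_point_saddle_quad0; exact: ltW.
split; first by move=> xs ys; apply: saddle_point_saddle_quad_unique.
split.
  case=> /rowP/(_ 0) + /rowP/(_ 0); rewrite !mxE => v10 v20.
  by rewrite v10 v20 eqxx in v0.
rewrite /= !subr0 gda_step_saddle_quad !enorm1_sqr !mxE eigv.
by rewrite (gda_alpha_max_eigen2 _ muL (ltW t0) acE acD).
Qed.
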